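(* Let $\alpha:X\to\mathbb PLX$ be measurable, let $t_a(x)\in\mathbb DX$ be $t_a(x)(S)=\alpha(x)(\{a\}\times S)$, and let $[\![-]\!]:\mathbb DX\to\mathbb DA^\infty$ be the unique $F$-coalgebra morphism from $\tilde\alpha^\#$ to $\Pi$ (with $\tilde\alpha^\#$ as below). Let $\mathbf{tr}:X\to\mathbb PA^\infty$ be any map such that for all $x\in X$, $a\in A$, $w\in A^*$: $$\mathbf{tr}(x)(A^\infty)=\alpha(x)(LX),\quad \mathbf{tr}(x)(\{\varepsilon\})=\alpha(x)(1),$$ $$\mathbf{tr}(x)(awA^\infty)=\int_X\mathbf{tr}(-)(wA^\infty)\,dt_a(x),\quad \mathbf{tr}(x)(\{aw\})=\int_X\mathbf{tr}(-)(\{w\})\,dt_a(x).$$ Then $[\![\eta_X(x)]\!]=\mathbf{tr}(x)$ for every $x\in X$, i.e. $\iota_{A^\infty}\circ\mathbf{tr}=[\![-]\!]\circ\eta_X$.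
   Context: Work in $\mathbf{Meas}$. $\mathbb I=[0,1]$; $A$ finite alphabet; $1=\{*\}$; $LX=A\times X+1$ with $\sigma$-algebra $(\mathcal P(A)\otimes\Sigma_X)\oplus\mathcal P(1)$. $\mathbb DX$ (resp. $\mathbb PX$) is the set of sub-probability (resp. probability) measures on $X$ with the $\sigma$-algebra generated by $m\mapsto m(S)$; $\iota_X:\mathbb PX\to\mathbb DX$ is the inclusion; $\eta_X(x)$ is the Dirac measure at $x$. $A^\infty=A^*\cup A^\omega$ with $\sigma$-algebra generated by $\{\emptyset\}\cup\{\{w\}\mid w\in A^*\}\cup\{wA^\infty\mid w\in A^*\}$. $F$ is the functor $FX=\mathbb I\times\mathbb I\times X^A$, $Ff=\mathrm{id}\times\mathrm{id}\times f^A$. $\Pi(m)=\langle m(A^\infty),m(\{\varepsilon\}),a\mapsto m_a\rangle$ with $m_a(S)=m(aS)$. The determinized coalgebra $\tilde\alpha^\#=\langle\tilde\alpha^\#_1,\tilde\alpha^\#_*,a\mapsto\tau_a\rangle:\mathbb DX\to F\mathbb DX$ is $\tilde\alpha^\#_1(m)=\int_X\alpha(-)(LX)\,dm$, $\tilde\alpha^\#_*(m)=\int_X\alpha(-)(1)\,dm$, $\tau_a(m)(S)=\int_X\alpha(-)(\{a\}\times S)\,dm$; it satisfies $\tilde\alpha^\#_1=\tilde\alpha^\#_*+\sum_a\tilde\alpha^\#_1\circ\tau_a$, which guarantees existence and uniqueness of a measurable $[\![-]\!]$ with $\Pi\circ[\![-]\!]=F[\![-]\!]\circ\tilde\alpha^\#$.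 *)

From HB Require Import structures.
From mathcomp Require Import all_boot all_order all_algebra.
From mathcomp Require Import all_classical all_reals all_analysis giry.
Set Implicit Arguments. Unset Strict Implicit. Unset Printing Implicit Defensive.
Import Order.TTheory GRing.Theory Num.Theory.
Local Open Scope classical_set_scope.

(* L X = A x X + 1, encoded as option (A * X): Some (a,x) is the       *)
(* left summand, None is the point * of 1.                             *)
Definition LX (A : finType) (X : Type) : Type := option (A * X).

Section LX_measurable.
Context (A : finType) d (X : measurableType d).

(* the product sigma-algebra P(A) (x) Sigma_X on A * X: generated by   *)
(* measurable rectangles SA `*` B (every SA is measurable in P(A))     *)
Definition AX_rect : set (set (A * X)) :=
  [set R | exists (SA : set A) (B : set X), measurable B /\ R = SA `*` B].

(* S is measurable iff its restriction to A * X is (no condition on 1) *)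
Definition LX_measurable : set (set (LX A X)) :=
  [set S | <<s AX_rect >> (Some @^-1` S)].

Lemma LX_measurable0 : LX_measurable set0.
Proof. by rewrite /LX_measurable /= preimage_set0; exact: sigma_algebra0. Qed.

Lemma LX_measurableC (S : set (LX A X)) :
  LX_measurable S -> LX_measurable (~` S).
Proof.
rewrite /LX_measurable /= preimage_setC => h.
by rewrite -setTD; exact: sigma_algebraCD.
Qed.

Lemma LX_measurableU (F : (set (LX A X))^nat) :
  (forall i, LX_measurable (F i)) -> LX_measurable (\bigcup_i F i).
Proof.
by move=> h; rewrite /LX_measurable /= preimage_bigcup; exact: sigma_algebra_bigcup.
Qed.

HB.instance Definition _ := gen_eqMixin (LX A X).
HB.instance Definition _ := gen_choiceMixin (LX A X).
HB.instance Definition _ := isPointed.Build (LX A X) None.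
HB.instance Definition _ := @isMeasurable.Build default_measure_display (LX A X)
  LX_measurable LX_measurable0 LX_measurableC LX_measurableU.

End LX_measurable.

Inductive word (A : Type) : Type :=
| Fin of seq A
| Inf of (nat -> A).

Definition eps {A : Type} : word A := Fin [::].

Definition wcons {A : Type} (a : A) (u : word A) : word A :=
  match u with
  | Fin s => Fin (a :: s)
  | Inf f => Inf (fun n => if n is k.+1 then f k else a)
  end.

Definition wprefix {A : Type} (w : seq A) (u : word A) : Prop :=
  match u with
  | Fin s => exists v, s = w ++ v
  | Inf f => forall i (x0 : A), (i < size w)%N -> f i = nth x0 w i
  end.

Definition cyl {A : Type} (w : seq A) : set (word A) := [set u | wprefix w u].

Definition Ainf (A : finType) : Type := word A.

Section Ainf_measurable.
Context (A : finType).

Definition Ainf_gen : set (set (Ainf A)) :=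
  [set S | S = set0 \/ (exists w, S = [set Fin w]) \/ (exists w, S = cyl w)].

Definition Ainf_measurable : set (set (Ainf A)) := <<s Ainf_gen >>.

Lemma Ainf_measurableC (S : set (Ainf A)) :
  Ainf_measurable S -> Ainf_measurable (~` S).
Proof. by move=> h; rewrite -setTD; exact: sigma_algebraCD. Qed.

HB.instance Definition _ := gen_eqMixin (Ainf A).
HB.instance Definition _ := gen_choiceMixin (Ainf A).
HB.instance Definition _ := isPointed.Build (Ainf A) eps.
HB.instance Definition _ := @isMeasurable.Build default_measure_display (Ainf A)
  Ainf_measurable (@sigma_algebra0 _ setT Ainf_gen) Ainf_measurableC
  (@sigma_algebra_bigcup _ setT Ainf_gen).

End Ainf_measurable.

Definition t_ {A : finType} d {X : measurableType d} {R : realType}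
  (alpha : X -> probability (LX A X) R) (a : A) (x : X) : set X -> \bar R :=
  fun S => alpha x (Some @` ([set a] `*` S)).

From HB Require Import structures.
From mathcomp Require Import all_boot all_order all_algebra.
From mathcomp Require Import all_classical all_reals all_analysis giry.
From mathcomp Require Import measurable_realfun.
Import Order.TTheory GRing.Theory Num.Theory.
Local Open Scope classical_set_scope.
Local Open Scope ereal_scope.

(** Unfolding the coalgebra-morphism equations of [sem] along a word
    [a_1 ... a_n] expresses [sem m] of the cylinder and of the singleton of
    that word as an [n]-fold iterated integral against the kernels [t_ a_i],
    started from [m]; the hypotheses on [tr] say that [tr(-)] of the same set
    is the same iterated integral started from a point. Hence [sem (giry_ret x)]
    and [tr x] agree on the generators of the sigma-algebra of [A^infty],
    which are closed under intersection and contain the whole space, and two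
    finite measures agreeing on such a family are equal. *)

Set Implicit Arguments. Unset Strict Implicit. Unset Printing Implicit Defensive.

Section LX_sets.
Context (A : finType) (d : measure_display) (X : measurableType d).

Lemma measurable_Some_setX (a : A) (S : set X) :
  measurable S -> measurable (Some @` ([set a] `*` S) : set (LX A X)).
Proof.
move=> mS; rewrite /measurable /= /LX_measurable /=.
have -> : Some @^-1` (Some @` ([set a] `*` S)) = [set a] `*` S.
  by apply/seteqP; split=> [u [v Pv [<-]]|u Pu] //; exists u.
by apply: sub_sigma_algebra; exists [set a], S.
Qed.

Lemma measurable_None : measurable ([set None] : set (LX A X)).
Proof.
rewrite /measurable /= /LX_measurable /=.
have -> : Some @^-1` [set None] = set0 :> set (A * X) by apply/seteqP; split.
exact: sigma_algebra0.
Qed.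

End LX_sets.

Section t_subprobability.
Context (R : realType) (A : finType) (d : measure_display) (X : measurableType d)
  (alpha : X -> probability (LX A X) R) (a : A) (y : X).

Let t0 : t_ alpha a y set0 = 0.
Proof. by rewrite /t_ setX0 image_set0 measure0. Qed.

Let t_ge0 S : 0 <= t_ alpha a y S.
Proof. exact: measure_ge0. Qed.

Let t_semi_sigma_additive : semi_sigma_additive (t_ alpha a y).
Proof.
move=> F mF tF mU; rewrite /t_ setX_bigcupr image_bigcup.
apply: (@measure_semi_sigma_additive _ _ _ (alpha y)
  (fun n => Some @` ([set a] `*` F n))).
- by move=> n; exact: measurable_Some_setX.
- move=> i j _ _ [_ [[[b u] [_ Fiu] <-] [[b' u'] [_ Fju'] [_ eu]]]].
  by apply: tF => //; exists u; split => //; rewrite -eu.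
- by rewrite -image_bigcup -setX_bigcupr; exact: measurable_Some_setX.
Qed.

HB.instance Definition _ :=
  isMeasure.Build _ _ _ (t_ alpha a y) t0 t_ge0 t_semi_sigma_additive.

Let t_setT : t_ alpha a y setT <= 1.
Proof.
apply: le_trans (probability_le1 (alpha y) measurableT).
by apply: le_measure; rewrite ?inE//; exact: measurable_Some_setX.
Qed.

HB.instance Definition _ :=
  Measure_isSubProbability.Build _ _ _ (t_ alpha a y) t_setT.

End t_subprobability.

Section words.
Context (A : finType).

Lemma cyl_nil : cyl [::] = [set: Ainf A].
Proof. by apply/seteqP; split => // -[s|f] _ //=; exists s. Qed.

Lemma cyl_cons (a : A) (w : seq A) : cyl (a :: w) = wcons a @` cyl w.
Proof.
apply/seteqP; split.
- case=> [s [v ->]|f h] /=; first by exists (Fin (w ++ v)) => //; exists v.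
  exists (Inf (fun n => f n.+1)); first by move=> i x0 hi /=; rewrite (h i.+1 x0).
  by congr Inf; apply/funext => -[|n] //=; rewrite (h 0%N a).
- move=> _ [[s [v ->]|f h] <-] /=; first by exists v.
  by move=> [|i] x0 //= hi; rewrite (h i x0).
Qed.

Lemma Fin_cons (a : A) (w : seq A) :
  [set Fin (a :: w)] = wcons a @` [set Fin w] :> set (Ainf A).
Proof. by rewrite image_set1. Qed.

Lemma measurable_cyl (w : seq A) : measurable (cyl w : set (Ainf A)).
Proof. by apply: sub_sigma_algebra; right; right; exists w. Qed.

Lemma measurable_Fin (w : seq A) : measurable ([set Fin w] : set (Ainf A)).
Proof. by apply: sub_sigma_algebra; right; left; exists w. Qed.

Lemma take_size_prefix (u : Ainf A) (w v : seq A) :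
  cyl w u -> cyl v u -> (size w <= size v)%N -> take (size w) v = w.
Proof.
case: u => [s [r1 e1] [r2 e2] hs|f h1 h2 hs] /=.
  by rewrite -(takel_cat r2 hs) -e2 e1 take_size_cat.
case: w h1 hs => [|b w'] h1 hs; first by rewrite take0.
apply: (@eq_from_nth _ b); first by rewrite size_takel.
move=> i; rewrite size_takel // => hi.
by rewrite nth_take // -(h1 i b hi) (h2 i b) //; exact: leq_trans hi hs.
Qed.

Lemma subset_cyl (w v : seq A) : take (size w) v = w -> cyl v `<=` cyl w.
Proof.
move=> e [s [r ->]|f h i x0 hi] /=.
  by exists (drop (size w) v ++ r); rewrite catA -{1}e cat_take_drop.
have hv : (i < size v)%N.
  by apply: leq_trans hi _; rewrite -{1}e size_take_min geq_minr.
by rewrite (h i x0 hv) -[in RHS]e nth_take.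
Qed.

(* Cylinders meeting at a word are nested: the longer prefix extends the other. *)
Lemma setI_cyl (w v : seq A) :
  cyl w `&` cyl v = set0 \/ cyl w `&` cyl v = cyl w \/ cyl w `&` cyl v = cyl v.
Proof.
have [[u [hw hv]]|h] := pselect (exists u, cyl w u /\ cyl v u); last first.
  by left; apply/seteqP; split => // u [hw hv]; apply: h; exists u.
right; have [le|lt] := leqP (size w) (size v).
  by right; apply/setIidr/subset_cyl/(take_size_prefix hw hv le).
by left; apply/setIidl/subset_cyl/(take_size_prefix hv hw (ltnW lt)).
Qed.

Lemma setI_closed_Ainf_gen : setI_closed (@Ainf_gen A).
Proof.
have Fin_cyl (w v : seq A) : Ainf_gen ([set Fin w] `&` cyl v).
  have [h|h] := pselect (cyl v (Fin w)).
    by right; left; exists w; apply/setIidl => _ ->.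
  by left; apply/seteqP; split => // _ [-> ].
move=> S T [->|[[w ->]|[w ->]]] [->|[[v ->]|[v ->]]];
  rewrite ?set0I ?setI0; try by left.
- have [<-|ne] := eqVneq w v; first by right; left; exists w; rewrite setIid.
  by left; apply/seteqP; split => // _ [-> [e]]; move: ne; rewrite e eqxx.
- exact: Fin_cyl.
- by rewrite setIC; exact: Fin_cyl.
- have [->|[->|->]] := setI_cyl w v; [by left|by right; right; exists w|].
  by right; right; exists v.
Qed.

End words.

Section iterated_integrals.
Context (R : realType) (A : finType) (d : measure_display) (X : measurableType d)
  (alpha : X -> probability (LX A X) R).
Hypothesis alpha_meas : measurable_fun [set: X]
  (fun x => (alpha x : subprobability (LX A X) R) : giry (LX A X) R).

Lemma measurable_alpha_ev (B : set (LX A X)) : measurable B ->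
  measurable_fun [set: X] (fun x => alpha x B).
Proof.
move=> mB _ Y mY; rewrite setTI.
have := measurable_giry_ev (R := R) mB measurableT mY.
by rewrite setTI => /(alpha_meas measurableT); rewrite setTI.
Qed.

Definition tkernel (a : A) (y : X) : giry X R := t_ alpha a y.

Lemma measurable_tkernel (a : A) : measurable_fun [set: X] (tkernel a).
Proof.
apply: measurable_giry_codensity => // B mB.
exact: measurable_alpha_ev (measurable_Some_setX a mB).
Qed.

Definition tau (a : A) (m : giry X R) : giry X R :=
  giry_bind m (measurable_tkernel a).

Lemma tauE (a : A) (m : giry X R) (S : set X) : measurable S ->
  tau a m S = \int[m]_y t_ alpha a y S.
Proof.
move=> mS.
have mS1 : measurable_fun [set: X] (fun x => (\1_S x : R)%:E).
  exact/measurable_EFinP/measurable_indic.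
have S1_ge0 (x : X) : 0 <= (\1_S x : R)%:E by rewrite lee_fin.
have := giry_int_bind m (measurable_tkernel a) mS1 S1_ge0.
rewrite /giry_int integral_indic // setIT => ->.
by apply: eq_integral => y _; rewrite integral_indic // setIT.
Qed.

Lemma integral_tau (a : A) (m : giry X R) (h : X -> \bar R) :
  measurable_fun [set: X] h -> (forall y, 0 <= h y) ->
  \int[tau a m]_y h y = \int[m]_y \int[t_ alpha a y]_z h z.
Proof. exact: giry_int_bind. Qed.

Variable f : seq A -> X -> \bar R.
Hypothesis f_ge0 : forall w y, 0 <= f w y.
Hypothesis measurable_f_nil : measurable_fun [set: X] (f [::]).
Hypothesis f_cons : forall a w y, f (a :: w) y = \int[t_ alpha a y]_z f w z.

Lemma measurable_f (w : seq A) : measurable_fun [set: X] (f w).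
Proof.
elim: w => // a w IH; rewrite (funext (f_cons a w)).
move=> _ Y mY; rewrite setTI.
have := measurable_giry_int IH (f_ge0 w) measurableT mY.
by rewrite setTI => /(measurable_tkernel a measurableT); rewrite setTI.
Qed.

Variable sem : giry X R -> giry (Ainf A) R.
Hypothesis sem_a : forall (a : A) (m m' : giry X R),
  (forall S : set X, measurable S -> m' S = \int[m]_y t_ alpha a y S) ->
  forall S : set (Ainf A), measurable S -> sem m (wcons a @` S) = sem m' S.
Variable E : seq A -> set (Ainf A).
Hypothesis measurable_E : forall w, measurable (E w).
Hypothesis E_cons : forall a w, E (a :: w) = wcons a @` E w.
Hypothesis sem_E_nil : forall m, sem m (E [::]) = \int[m]_y f [::] y.

Lemma sem_E (w : seq A) (m : giry X R) : sem m (E w) = \int[m]_y f w y.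
Proof.
elim: w m => // a w IH m.
rewrite E_cons (sem_a (tauE a m) (measurable_E w)) IH.
rewrite integral_tau //; last exact: measurable_f.
by apply: eq_integral => y _; rewrite f_cons.
Qed.

Lemma sem_ret_E (w : seq A) (x : X) : sem (giry_ret x) (E w) = f w x.
Proof. by rewrite sem_E; exact: giry_int_ret (measurable_f w). Qed.

End iterated_integrals.

Unset Implicit Arguments. Set Strict Implicit.

Theorem mainTheorem13 (R : realType) (A : finType) (d : measure_display)
  (X : measurableType d)
  (alpha : X -> probability (LX A X) R)
  (alpha_meas : measurable_fun [set: X]
     (fun x => (alpha x : subprobability (LX A X) R) : giry (LX A X) R))
  (sem : giry X R -> giry (Ainf A) R)
  (sem_meas : measurable_fun [set: giry X R] sem)
  (* Pi o sem = F sem o alpha#, first component *)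
  (sem_1 : forall m : giry X R,
     sem m [set: Ainf A] = \int[m]_y alpha y [set: LX A X])
  (* second component *)
  (sem_star : forall m : giry X R,
     sem m [set eps] = \int[m]_y alpha y [set None])
  (* third component: (sem m)_a = sem (tau_a m) *)
  (sem_a : forall (a : A) (m m' : giry X R),
     (forall S : set X, measurable S -> m' S = \int[m]_y t_ alpha a y S) ->
     forall S : set (Ainf A), measurable S -> sem m (wcons a @` S) = sem m' S)
  (tr : X -> probability (Ainf A) R)
  (tr_1 : forall x, tr x [set: Ainf A] = alpha x [set: LX A X])
  (tr_star : forall x, tr x [set eps] = alpha x [set None])
  (tr_cyl : forall (x : X) (a : A) (w : seq A),
     tr x (cyl (a :: w)) = \int[t_ alpha a x]_y tr y (cyl w))
  (tr_sing : forall (x : X) (a : A) (w : seq A),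
     tr x [set Fin (a :: w)] = \int[t_ alpha a x]_y tr y [set Fin w]) :
  forall (x : X) (S : set (Ainf A)), measurable S ->
    sem (giry_ret x : giry X R) S = tr x S.
Proof.
have tr_ge0 (E : seq A -> set (Ainf A)) w y : 0 <= tr y (E w).
  exact: measure_ge0.
have sem_ret_cyl w x : sem (giry_ret x) (cyl w) = tr x (cyl w).
  apply: (sem_ret_E alpha_meas (tr_ge0 cyl) _ _ sem_a
    (@measurable_cyl A) (@cyl_cons A)).
  - by rewrite cyl_nil (funext tr_1); exact: measurable_alpha_ev.
  - by move=> a v y; exact: tr_cyl.
  - by move=> m; rewrite cyl_nil sem_1; apply: eq_integral => y _; rewrite tr_1.
have sem_ret_Fin w x : sem (giry_ret x) [set Fin w] = tr x [set Fin w].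
  apply: (sem_ret_E alpha_meas (tr_ge0 (fun w => [set Fin w])) _ _ sem_a
    (@measurable_Fin A) (@Fin_cons A)).
  - rewrite (funext tr_star).
    exact: (measurable_alpha_ev alpha_meas (@measurable_None A d X)).
  - by move=> a v y; exact: tr_sing.
  - by move=> m; rewrite sem_star; apply: eq_integral => y _; rewrite tr_star.
move=> x S mS.
apply: (measure_unique (@Ainf_gen A) (fun=> cyl [::])) => //.
- exact: setI_closed_Ainf_gen.
- by move=> _; right; right; exists [::].
- by apply/seteqP; split => // u _; exists 0%N => //; rewrite cyl_nil.
- move=> _ [->|[[w ->]|[w ->]]]; first by rewrite !measure0.
    exact: sem_ret_Fin.
  exact: sem_ret_cyl.
- by move=> _; rewrite cyl_nil (le_lt_trans sprobability_setT) ?ltry.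
Qed.
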